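(* Let $c_0>0$, $T>0$, and let $(\hat u,\hat v)$ be a smooth solution of the NLDE on $\mathbb{R}\times[0,T]$ with $\mathcal{M}_0,\mathcal{M}<\infty$. There exist constants $\hat C_2,\hat C_3>0$, depending only on $c_0,\mathcal{M}_0,\mathcal{M},m,\alpha,\beta$, such that for every $\tau\in(0,1)$, every time-splitting solution with mesh $\tau$ whose initial data satisfy $\sum_j(|u_j^0|^2+|v_j^0|^2)\tau\le c_0$, all $j\in\mathbb{Z}$, all integers $n\ge0$ with $(n+1)\tau\le T$, and all $s\in[0,\tau]$, $$\tilde{\mathcal{L}}_j^n(s)+\tilde{\mathcal{D}}_j^n(s)\le\hat C_2\big(\tilde{\mathcal{L}}_j^n(0)+\tilde{\mathcal{D}}_j^n(0)\big)+\hat C_3\mathcal{M}^2\tau.$$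
   Context: Fix constants $m\ge 0$ and $\alpha,\beta\in\mathbb{R}$. The NLDE for $(u,v):\mathbb{R}\times[0,T]\to\mathbb{C}^2$ is $u_t+u_x=imv+i\alpha u|v|^2+2i\beta(\bar u v+u\bar v)v$, $v_t-v_x=imu+i\alpha v|u|^2+2i\beta(\bar u v+u\bar v)u$. Let (N) denote the ODE system on $\mathbb{C}^2$: $\frac{du}{ds}=imv+i\alpha u|v|^2+2i\beta(\bar u v+u\bar v)v$, $\frac{dv}{ds}=imu+i\alpha v|u|^2+2i\beta(\bar u v+u\bar v)u$. Time-splitting scheme with mesh $\tau>0$: given $(u_j^0,v_j^0)_{j\in\mathbb{Z}}\subset\mathbb{C}^2$ with $\sum_j(|u_j^0|^2+|v_j^0|^2)<\infty$, set $(u^{(\tau)},v^{(\tau)})(x,0)=(u_j^0,v_j^0)$ for $x\in[j\tau,(j+1)\tau)$. Inductively, once $(u^{(\tau)},v^{(\tau)})(\cdot,n\tau)$ is defined, set for $t\in[n\tau,(n+1)\tau)$: $u^{(\tau)}(x,t)=u^{(\tau)}(x-(t-n\tau),n\tau)$, $v^{(\tau)}(x,t)=v^{(\tau)}(x+(t-n\tau),n\tau)$; let $(u^{(\tau)},v^{(\tau)})(x,(n+1)\tau-)$ be the left limit in $t$; and for each $x$ define $(u^{(\tau)},v^{(\tau)})(x,(n+1)\tau)$ as the value at $s=\tau$ of the solution of (N) with value $(u^{(\tau)},v^{(\tau)})(x,(n+1)\tau-)$ at $s=0$ (this is globally well defined). Notation: $(u_j^n,v_j^n)=(u^{(\tau)},v^{(\tau)})(j\tau,n\tau)$,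 $(u_j^{n+1-},v_j^{n+1-})=(u^{(\tau)},v^{(\tau)})(j\tau,(n+1)\tau-)$; $(u_j^{n,2}(s),v_j^{n,2}(s))$, $s\in[0,\tau]$, is the solution of (N) with initial value $(u_j^{n+1-},v_j^{n+1-})$. Comparison quantities: $\mathcal{M}_0=\max_{\mathbb{R}\times[0,T]}(|\hat u|+|\hat v|+1)$, $\mathcal{M}=\max_{\mathbb{R}\times[0,T]}(|\hat u_t|+|\hat u_x|+|\hat v_t|+|\hat v_x|+1)$. For $s\in[0,\tau]$: $\mathcal{U}_j^n(s)=\hat u(j\tau+s,n\tau+s)-u_{j+1}^{n,2}(s)$, $\mathcal{V}_{j+2}^n(s)=\hat v((j+2)\tau-s,n\tau+s)-v_{j+1}^{n,2}(s)$, $\tilde{\mathcal{L}}_j^n(s)=|\mathcal{U}_j^n(s)|^2+|\mathcal{V}_{j+2}^n(s)|^2$, $\tilde{\mathcal{D}}_j^n(s)=|\mathcal{U}_j^n(s)|^2|v_{j+1}^{n,2}(s)|^2+|\mathcal{V}_{j+2}^n(s)|^2|u_{j+1}^{n,2}(s)|^2$. *)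

From Stdlib Require Import Reals ZArith.
From Coquelicot Require Import Coquelicot.
Open Scope R_scope.

(* The nonlinearity of (N) / NLDE:
   F1 (u,v) = i m v + i a u |v|^2 + 2 i b (conj u v + u conj v) v
   F2 (u,v) = i m u + i a v |u|^2 + 2 i b (conj u v + u conj v) u *)
Definition NL1 (m a b : R) (u v : C) : C :=
  Cplus (Cplus (Cmult (Cmult Ci (RtoC m)) v)
               (Cmult (Cmult (Cmult Ci (RtoC a)) u) (RtoC (Cmod v ^ 2))))
        (Cmult (Cmult (Cmult (RtoC 2) (Cmult Ci (RtoC b)))
                      (Cplus (Cmult (Cconj u) v) (Cmult u (Cconj v)))) v).

Definition NL2 (m a b : R) (u v : C) : C :=
  Cplus (Cplus (Cmult (Cmult Ci (RtoC m)) u)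
               (Cmult (Cmult (Cmult Ci (RtoC a)) v) (RtoC (Cmod u ^ 2))))
        (Cmult (Cmult (Cmult (RtoC 2) (Cmult Ci (RtoC b)))
                      (Cplus (Cmult (Cconj u) v) (Cmult u (Cconj v)))) u).

Definition solves_N (m a b : R) (wu wv : R -> C) : Prop :=
  forall s : R,
    is_derive wu s (NL1 m a b (wu s) (wv s)) /\
    is_derive wv s (NL2 m a b (wu s) (wv s)).

Definition smooth2 (f : R -> R -> C) : Prop :=
  exists D : nat -> nat -> R -> R -> C,
    D O O = f /\
    forall (k l : nat) (x t : R),
      is_derive (fun y => D k l y t) x (D (S k) l x t) /\
      is_derive (fun s => D k l x s) t (D k (S l) x t) /\
      continuous (fun p : R * R => D k l (fst p) (snd p)) (x, t).

Definition sumZ_sym (f : Z -> R) (N : nat) : R :=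
  sum_f_R0 (fun k => f (Z.of_nat k - Z.of_nat N)%Z) (2 * N).

(* The time-splitting scheme with mesh tau, initial data (u0 j, v0 j),
   producing (U, V) : R -> R -> C (space, time), for all times t >= 0. *)
Definition time_splitting (m a b tau : R) (u0 v0 : Z -> C)
    (U V : R -> R -> C) : Prop :=
  (forall (j : Z) (x : R), IZR j * tau <= x < (IZR j + 1) * tau ->
      U x 0 = u0 j /\ V x 0 = v0 j) /\
  (forall (n : nat) (x t : R), INR n * tau <= t < (INR n + 1) * tau ->
      U x t = U (x - (t - INR n * tau)) (INR n * tau) /\
      V x t = V (x + (t - INR n * tau)) (INR n * tau)) /\
  (forall (n : nat) (x : R), exists (Lu Lv : C) (wu wv : R -> C),
      filterlim (fun t => U x t) (at_left ((INR n + 1) * tau)) (locally Lu) /\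
      filterlim (fun t => V x t) (at_left ((INR n + 1) * tau)) (locally Lv) /\
      solves_N m a b wu wv /\ wu 0 = Lu /\ wv 0 = Lv /\
      U x ((INR n + 1) * tau) = wu tau /\ V x ((INR n + 1) * tau) = wv tau).

From Stdlib Require Import Reals ZArith Lra Lia Psatz.
From Coquelicot Require Import Coquelicot.
Open Scope R_scope.

(* Along the characteristics x = j tau + s (for u) and x = (j + 2) tau - s (for v), the smooth
   solution solves the ODE (N) up to a residual of order tau, since u and v are evaluated at
   points at most 2 tau apart.  Compare it with the solution (u^{n,2}, v^{n,2}) of (N) through
   L~ + D~ = |U|^2 (1 + |v|^2) + |V|^2 (1 + |u|^2): the weights absorb the cubic growth of the
   nonlinearity, so L~ + D~ grows at rate C (1 + K) plus a source (1 + K) tau^2, where K bounds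
   |u|^2 + |v|^2 along the ODE solution.  Transport and (N) both conserve the discrete mass
   sum_j (|u_j|^2 + |v_j|^2) tau <= c0, hence K <= 2 c0 / tau, and on a step of length
   s <= tau Gronwall only sees (1 + K) s <= 1 + 2 c0, independently of tau. *)

Definition Cinner (z w : C) : R := Re z * Re w + Im z * Im w.

Lemma C_eq_ReIm (z w : C) : Re z = Re w -> Im z = Im w -> z = w.
Proof. destruct z, w; unfold Re, Im; simpl; intros -> ->; reflexivity. Qed.

Lemma Rabs_Cinner_le z w : Rabs (Cinner z w) <= Cmod z * Cmod w.
Proof.
  assert (Hlag : Cinner z w ^ 2 + (Re z * Im w - Im z * Re w) ^ 2 = (Cmod z * Cmod w) ^ 2)
    by (rewrite Rpow_mult_distr, !Cmod2_alt; unfold Cinner; ring).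
  pose proof (Cmod_ge_0 z); pose proof (Cmod_ge_0 w).
  rewrite <- (Rabs_pos_eq (Cmod z * Cmod w)) by nra.
  apply Rsqr_le_abs_0; unfold Rsqr.
  pose proof (pow2_ge_0 (Re z * Im w - Im z * Re w)); nra.
Qed.

Lemma Cinner_le z w : Cinner z w <= Cmod z * Cmod w.
Proof. exact (Rle_trans _ _ _ (Rle_abs _) (Rabs_Cinner_le z w)). Qed.

Lemma Cmod_RtoC_mult_le (r : R) (z : C) (c d : R) :
  Rabs r <= c -> Cmod z <= d -> Cmod (RtoC r * z) <= c * d.
Proof.
  intros Hr Hz; rewrite Cmod_mult, Cmod_R.
  apply Rmult_le_compat; auto using Rabs_pos, Cmod_ge_0.
Qed.

Lemma NL1_Ci m al be u v :
  NL1 m al be u v =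
  (Ci * (RtoC m * v + RtoC (al * Cmod v ^ 2) * u + RtoC (4 * be * Cinner u v) * v))%C.
Proof. apply C_eq_ReIm; unfold NL1, Cinner, Cconj, Re, Im; simpl; ring. Qed.

Lemma NL2_NL1 m al be u v : NL2 m al be u v = NL1 m al be v u.
Proof. unfold NL1, NL2; f_equal; f_equal; ring. Qed.

Lemma Cmod_NL1_sub m al be a b p q : 0 <= m ->
  Cmod (NL1 m al be a b - NL1 m al be p q)%C <=
  m * Cmod (b - q)
  + Rabs al * (Cmod b ^ 2 * Cmod (a - p) + Cmod (b - q) * (Cmod b + Cmod q) * Cmod p)
  + 4 * Rabs be * (Cmod a * Cmod b * Cmod (b - q)
                   + (Cmod (a - p) * Cmod b + Cmod p * Cmod (b - q)) * Cmod q).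
Proof.
  intros Hm.
  (* split |b|^2 a - |q|^2 p and <a,b> b - <p,q> q along a - p and b - q *)
  set (t1 := (RtoC m * (b - q))%C).
  set (t2 := (RtoC (al * Cmod b ^ 2) * (a - p))%C).
  set (t3 := (RtoC (al * Cinner (b - q) (b + q)) * p)%C).
  set (t4 := (RtoC (4 * be * Cinner a b) * (b - q))%C).
  set (t5 := (RtoC (4 * be * (Cinner (a - p) b + Cinner p (b - q))) * q)%C).
  assert (Hdiff : (NL1 m al be a b - NL1 m al be p q)%C = (Ci * (t1 + t2 + t3 + t4 + t5))%C).
  { rewrite !NL1_Ci; apply C_eq_ReIm;
      unfold t1, t2, t3, t4, t5, Cinner; rewrite !Cmod2_alt; unfold Re, Im; simpl; ring. }
  rewrite Hdiff, Cmod_mult, Cmod_Ci, Rmult_1_l.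
  assert (B1 : Cmod t1 <= m * Cmod (b - q))
    by (apply Cmod_RtoC_mult_le; [rewrite Rabs_pos_eq|]; lra).
  assert (B2 : Cmod t2 <= Rabs al * Cmod b ^ 2 * Cmod (a - p)).
  { apply Cmod_RtoC_mult_le; [|lra].
    rewrite Rabs_mult, (Rabs_pos_eq (_ ^ 2)) by apply pow2_ge_0; lra. }
  assert (B3 : Cmod t3 <= Rabs al * (Cmod (b - q) * (Cmod b + Cmod q)) * Cmod p).
  { apply Cmod_RtoC_mult_le; [|lra]. rewrite Rabs_mult.
    apply Rmult_le_compat_l; [apply Rabs_pos|].
    eapply Rle_trans; [apply Rabs_Cinner_le|].
    apply Rmult_le_compat_l; [apply Cmod_ge_0|apply Cmod_triangle]. }
  assert (B4 : Cmod t4 <= 4 * Rabs be * (Cmod a * Cmod b) * Cmod (b - q)).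
  { apply Cmod_RtoC_mult_le; [|lra]. rewrite !Rabs_mult, (Rabs_pos_eq 4) by lra.
    pose proof (Rabs_pos be); pose proof (Rabs_Cinner_le a b); nra. }
  assert (B5 : Cmod t5 <= 4 * Rabs be * (Cmod (a - p) * Cmod b + Cmod p * Cmod (b - q)) * Cmod q).
  { apply Cmod_RtoC_mult_le; [|lra]. rewrite !Rabs_mult, (Rabs_pos_eq 4) by lra.
    pose proof (Rabs_pos be); pose proof (Rabs_Cinner_le (a - p) b);
    pose proof (Rabs_Cinner_le p (b - q));
    pose proof (Rabs_triang (Cinner (a - p) b) (Cinner p (b - q))); nra. }
  pose proof (Cmod_triangle (t1 + t2 + t3 + t4) t5); pose proof (Cmod_triangle (t1 + t2 + t3) t4);
  pose proof (Cmod_triangle (t1 + t2) t3); pose proof (Cmod_triangle t1 t2).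
  lra.
Qed.

Lemma Cmod_NL1_le m al be u v : 0 <= m ->
  Cmod (NL1 m al be u v) <=
  m * Cmod v + Rabs al * (Cmod v ^ 2 * Cmod u) + 4 * Rabs be * (Cmod u * Cmod v * Cmod v).
Proof.
  intros Hm.
  assert (H0 : NL1 m al be 0 0 = 0%C) by (apply C_eq_ReIm; unfold NL1, Re, Im; simpl; ring).
  assert (Hz : forall z : C, (z - 0)%C = z)
    by (intros z; apply C_eq_ReIm; unfold Re, Im; simpl; ring).
  pose proof (Cmod_NL1_sub m al be u v 0 0 Hm) as Hsub.
  rewrite H0, !Hz, Cmod_0 in Hsub. lra.
Qed.

Definition nl_lip (m al be M : R) : R := m + 2 * Rabs al * M ^ 2 + 8 * Rabs be * M ^ 2.

Lemma nl_lip_nonneg m al be M : 0 <= m -> 0 <= nl_lip m al be M.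
Proof.
  intros; unfold nl_lip; pose proof (Rabs_pos al); pose proof (Rabs_pos be);
    pose proof (pow2_ge_0 M); nra.
Qed.

Lemma Cmod_NL1_sub_r m al be M u v v' :
  0 <= m -> Cmod u <= M -> Cmod v <= M -> Cmod v' <= M ->
  Cmod (NL1 m al be u v - NL1 m al be u v') <= nl_lip m al be M * Cmod (v - v').
Proof.
  intros Hm Hu Hv Hv'.
  pose proof (Cmod_NL1_sub m al be u v u v' Hm) as H.
  assert (Hz : Cmod (u - u) = 0) by (rewrite <- Cmod_0; f_equal; ring).
  rewrite Hz in H.
  set (Y := Cmod (v - v')) in *.
  assert (HY : 0 <= Y) by apply Cmod_ge_0.
  pose proof (Cmod_ge_0 u); pose proof (Cmod_ge_0 v); pose proof (Cmod_ge_0 v').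
  pose proof (Rabs_pos al); pose proof (Rabs_pos be).
  assert (Hal : Rabs al * (Y * (Cmod v + Cmod v') * Cmod u) <= 2 * Rabs al * M ^ 2 * Y).
  { replace (2 * Rabs al * M ^ 2 * Y) with (Rabs al * (Y * (M + M) * M)) by ring.
    apply Rmult_le_compat_l; [lra|].
    apply Rmult_le_compat; [nra | lra | apply Rmult_le_compat_l; lra | lra]. }
  assert (Hbe : Cmod u * Cmod v * Y + Cmod u * Y * Cmod v' <= 2 * M ^ 2 * Y).
  { assert (Cmod u * Cmod v <= M * M) by (apply Rmult_le_compat; lra).
    assert (Cmod u * Cmod v' <= M * M) by (apply Rmult_le_compat; lra).
    nra. }
  unfold nl_lip; nra.
Qed.

Definition gap_rate (m al be M : R) : R := 12 * (1 + m + al + be) * (1 + M) ^ 2.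

Lemma gap_rate_nonneg m al be M : 0 <= m -> 0 <= al -> 0 <= be -> 0 <= gap_rate m al be M.
Proof. intros; unfold gap_rate; pose proof (pow2_ge_0 (1 + M)); nra. Qed.

Lemma two_mul_le u v w : u ^ 2 + v ^ 2 <= w -> 2 * u * v <= w.
Proof. intros H; pose proof (pow2_ge_0 (u - v)); nra. Qed.

(* X, Y, P, Q, A, B stand for |a - p|, |b - q|, |p|, |q|, |a|, |b| in gap_rate_half. *)
Section GapRate.
Variables (m al be M K X Y P Q : R).
Hypotheses (Hm : 0 <= m) (Hal : 0 <= al) (Hbe : 0 <= be).
Hypotheses (HX : 0 <= X) (HY : 0 <= Y) (HP : 0 <= P) (HQ : 0 <= Q).

Let phi := X ^ 2 * (1 + Q ^ 2) + Y ^ 2 * (1 + P ^ 2).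

Lemma gap_cross_le A B : 0 <= A <= M -> 0 <= B <= M ->
  2 * X * (m * Y + al * (B ^ 2 * X + Y * (B + Q) * P)
           + 4 * be * (A * B * Y + (X * B + P * Y) * Q))
  <= (m + 2 * al * M ^ 2 + al * M + al + 4 * be * M ^ 2 + 4 * be * M + 4 * be) * phi.
Proof.
  intros [HA HAM] [HB HBM].
  (* phi = X^2 + (XQ)^2 + Y^2 + (YP)^2, so each product of two of these is at most phi *)
  assert (Hphi : phi = X ^ 2 + (X * Q) ^ 2 + Y ^ 2 + (Y * P) ^ 2) by (unfold phi; ring).
  assert (HXQ2 := pow2_ge_0 (X * Q)); assert (HYP2 := pow2_ge_0 (Y * P)).
  assert (HX2 := pow2_ge_0 X); assert (HY2 := pow2_ge_0 Y).
  assert (p1 : 0 <= 2 * X * Y <= phi) by (split; [nra | apply two_mul_le; lra]).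
  assert (p2 : 0 <= 2 * X * X <= 2 * phi) by (split; nra).
  assert (p3 : 0 <= 2 * X * (Y * P) <= phi) by (split; [nra | apply two_mul_le; lra]).
  assert (p4 : 0 <= 2 * (X * Q) * (Y * P) <= phi) by (split; [nra | apply two_mul_le; lra]).
  assert (p5 : 0 <= 2 * X * (X * Q) <= phi) by (split; [nra | apply two_mul_le; lra]).
  assert (c2 : 0 <= al * B ^ 2 <= al * M ^ 2)
    by (split; [apply Rmult_le_pos | apply Rmult_le_compat_l]; nra).
  assert (c3 : 0 <= al * B <= al * M)
    by (split; [apply Rmult_le_pos | apply Rmult_le_compat_l]; nra).
  assert (c5 : 0 <= 4 * be * (A * B) <= 4 * be * M ^ 2)
    by (split; [repeat apply Rmult_le_pos | apply Rmult_le_compat_l]; nra).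
  assert (c6 : 0 <= 4 * be * B <= 4 * be * M)
    by (split; [repeat apply Rmult_le_pos | apply Rmult_le_compat_l]; nra).
  assert (r2 : al * B ^ 2 * (2 * X * X) <= al * M ^ 2 * (2 * phi))
    by (apply Rmult_le_compat; lra).
  assert (r3 : al * B * (2 * X * (Y * P)) <= al * M * phi) by (apply Rmult_le_compat; lra).
  assert (r5 : 4 * be * (A * B) * (2 * X * Y) <= 4 * be * M ^ 2 * phi)
    by (apply Rmult_le_compat; lra).
  assert (r6 : 4 * be * B * (2 * X * (X * Q)) <= 4 * be * M * phi)
    by (apply Rmult_le_compat; lra).
  replace (2 * X * (m * Y + al * (B ^ 2 * X + Y * (B + Q) * P)
           + 4 * be * (A * B * Y + (X * B + P * Y) * Q)))
    with (m * (2 * X * Y) + al * B ^ 2 * (2 * X * X) + al * B * (2 * X * (Y * P))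
          + al * (2 * (X * Q) * (Y * P)) + 4 * be * (A * B) * (2 * X * Y)
          + 4 * be * B * (2 * X * (X * Q)) + 4 * be * (2 * (X * Q) * (Y * P))) by ring.
  nra.
Qed.

Lemma gap_weight_le : P ^ 2 + Q ^ 2 <= K ->
  X ^ 2 * (2 * Q * (m * P + al * (P ^ 2 * Q) + 4 * be * (Q * P * P)))
  <= (m + 2 * al + 8 * be) * K * phi.
Proof.
  intros HK.
  assert (HPQ : 2 * P * Q <= K) by (pose proof (two_mul_le P Q (P ^ 2 + Q ^ 2)); lra).
  assert (HX2 := pow2_ge_0 X); assert (HP2 := pow2_ge_0 P); assert (HQ2 := pow2_ge_0 Q).
  assert (HXQ : (X * Q) ^ 2 <= phi) by (unfold phi; pose proof (pow2_ge_0 (Y * P)); nra).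
  assert (s1 : m * X ^ 2 * (2 * P * Q) <= m * phi * K)
    by (apply Rmult_le_compat;
        [apply Rmult_le_pos | nra | apply Rmult_le_compat_l; unfold phi |]; nra).
  assert (s2 : (X * Q) ^ 2 * P ^ 2 <= phi * K) by (apply Rmult_le_compat; nra).
  replace (X ^ 2 * (2 * Q * (m * P + al * (P ^ 2 * Q) + 4 * be * (Q * P * P))))
    with (m * X ^ 2 * (2 * P * Q) + 2 * (al + 4 * be) * ((X * Q) ^ 2 * P ^ 2)) by ring.
  nra.
Qed.

Lemma gap_rate_half_real E A B :
  0 <= E -> 0 <= A -> A <= M -> 0 <= B -> B <= M -> P ^ 2 + Q ^ 2 <= K ->
  2 * X * (E + (m * Y + al * (B ^ 2 * X + Y * (B + Q) * P)
               + 4 * be * (A * B * Y + (X * B + P * Y) * Q))) * (1 + Q ^ 2)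
  + X ^ 2 * (2 * Q * (m * P + al * (P ^ 2 * Q) + 4 * be * (Q * P * P)))
  <= gap_rate m al be M * (1 + K) * phi + (1 + K) * E ^ 2.
Proof.
  intros HE HA HAM HB HBM HK.
  pose proof (gap_cross_le A B (conj HA HAM) (conj HB HBM)) as Hcross.
  pose proof (gap_weight_le HK) as Hweight.
  set (S := m * Y + al * (B ^ 2 * X + Y * (B + Q) * P)
            + 4 * be * (A * B * Y + (X * B + P * Y) * Q)) in *.
  set (c1 := m + 2 * al * M ^ 2 + al * M + al + 4 * be * M ^ 2 + 4 * be * M + 4 * be) in *.
  set (c2 := m + 2 * al + 8 * be) in *.
  assert (HP2 := pow2_ge_0 P); assert (HQ2 := pow2_ge_0 Q).
  assert (HX2 := pow2_ge_0 X); assert (HY2 := pow2_ge_0 Y).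
  assert (phi0 : 0 <= phi) by (unfold phi; nra).
  assert (Hc1 : 0 <= c1) by (unfold c1; pose proof (pow2_ge_0 M); nra).
  assert (Herr : 2 * X * E * (1 + Q ^ 2) <= phi + (1 + K) * E ^ 2).
  { pose proof (two_mul_le X E (X ^ 2 + E ^ 2)).
    assert (X ^ 2 * (1 + Q ^ 2) <= phi) by (unfold phi; nra). nra. }
  assert (Hmain : 2 * X * S * (1 + Q ^ 2) <= c1 * phi * (1 + K)).
  { apply Rle_trans with (c1 * phi * (1 + Q ^ 2)).
    - apply Rmult_le_compat_r; lra.
    - apply Rmult_le_compat_l; [apply Rmult_le_pos|]; lra. }
  assert (Hrate : (1 + c1 + c2) * ((1 + K) * phi) <= gap_rate m al be M * ((1 + K) * phi))
    by (apply Rmult_le_compat_r; [nra | unfold c1, c2, gap_rate; nra]).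
  assert (HK0 : 0 <= K) by lra.
  assert (Hc2 : 0 <= c2 * phi) by (unfold c2; apply Rmult_le_pos; lra).
  replace (2 * X * (E + S) * (1 + Q ^ 2))
    with (2 * X * E * (1 + Q ^ 2) + 2 * X * S * (1 + Q ^ 2)) by ring.
  replace (gap_rate m al be M * (1 + K) * phi) with (gap_rate m al be M * ((1 + K) * phi)) by ring.
  nra.
Qed.

End GapRate.

(* For (a, b) the smooth solution on the characteristics and (p, q) the ODE solution,
   this is L~ + D~. *)
Definition weighted_gap (a b p q : C) : R :=
  Cmod (a - p) ^ 2 * (1 + Cmod q ^ 2) + Cmod (b - q) ^ 2 * (1 + Cmod p ^ 2).

Lemma weighted_gap_swap a b p q : weighted_gap a b p q = weighted_gap b a q p.
Proof. unfold weighted_gap; ring. Qed.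

Lemma weighted_gap_nonneg a b p q : 0 <= weighted_gap a b p q.
Proof.
  unfold weighted_gap; pose proof (pow2_ge_0 (Cmod (a - p))); pose proof (pow2_ge_0 (Cmod (b - q)));
    pose proof (pow2_ge_0 (Cmod p)); pose proof (pow2_ge_0 (Cmod q)); nra.
Qed.

Lemma gap_rate_half m al be M K E (a b p q da : C) :
  0 <= m -> 0 <= E -> Cmod a <= M -> Cmod b <= M -> Cmod p ^ 2 + Cmod q ^ 2 <= K ->
  Cmod (da - NL1 m al be a b) <= E ->
  2 * Cinner (a - p) (da - NL1 m al be p q) * (1 + Cmod q ^ 2)
  + Cmod (a - p) ^ 2 * (2 * Cinner q (NL1 m al be q p))
  <= gap_rate m (Rabs al) (Rabs be) M * (1 + K) * weighted_gap a b p q + (1 + K) * E ^ 2.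
Proof.
  intros Hm HE HaM HbM HK Hres.
  set (S := m * Cmod (b - q)
     + Rabs al * (Cmod b ^ 2 * Cmod (a - p) + Cmod (b - q) * (Cmod b + Cmod q) * Cmod p)
     + 4 * Rabs be * (Cmod a * Cmod b * Cmod (b - q)
                      + (Cmod (a - p) * Cmod b + Cmod p * Cmod (b - q)) * Cmod q)).
  assert (Hdiff : Cmod (da - NL1 m al be p q) <= E + S).
  { replace (da - NL1 m al be p q)%C
      with ((da - NL1 m al be a b) + (NL1 m al be a b - NL1 m al be p q))%C by ring.
    eapply Rle_trans; [apply Cmod_triangle|].
    pose proof (Cmod_NL1_sub m al be a b p q Hm); unfold S; lra. }
  assert (HX := Cmod_ge_0 (a - p)); assert (HQ := Cmod_ge_0 q).
  assert (H1 : Cinner (a - p) (da - NL1 m al be p q) <= Cmod (a - p) * (E + S))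
    by (eapply Rle_trans; [apply Cinner_le | apply Rmult_le_compat_l; auto]).
  assert (H2 : Cinner q (NL1 m al be q p) <= Cmod q *
    (m * Cmod p + Rabs al * (Cmod p ^ 2 * Cmod q) + 4 * Rabs be * (Cmod q * Cmod p * Cmod p)))
    by (eapply Rle_trans; [apply Cinner_le | apply Rmult_le_compat_l, Cmod_NL1_le; auto]).
  unfold S in H1.
  eapply Rle_trans; [|apply (gap_rate_half_real m (Rabs al) (Rabs be) M K
      (Cmod (a - p)) (Cmod (b - q)) (Cmod p) (Cmod q)) with (A := Cmod a) (B := Cmod b);
    auto using Rabs_pos, Cmod_ge_0].
  pose proof (pow2_ge_0 (Cmod q)); pose proof (pow2_ge_0 (Cmod (a - p))).
  apply Rplus_le_compat; [apply Rmult_le_compat_r | apply Rmult_le_compat_l]; nra.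
Qed.

Lemma Cinner_NL1_mass m al be p q :
  Cinner p (NL1 m al be p q) + Cinner q (NL1 m al be q p) = 0.
Proof. rewrite !NL1_Ci; unfold Cinner; rewrite !Cmod2_alt; unfold Re, Im; simpl; ring. Qed.

Definition is_derive_ReIm (f : R -> C) (s : R) (l : C) : Prop :=
  is_derive (fun t => Re (f t)) s (Re l) /\ is_derive (fun t => Im (f t)) s (Im l).

Lemma is_derive_ReIm_of (f : R -> C) s l : is_derive f s l -> is_derive_ReIm f s l.
Proof.
  intros H; split; unfold is_derive in *; eapply filterdiff_ext_lin.
  - apply (filterdiff_comp' f (fun z => fst z)); [exact H|].
    apply filterdiff_linear, is_linear_fst.
  - reflexivity.
  - apply (filterdiff_comp' f (fun z => snd z)); [exact H|].
    apply filterdiff_linear, is_linear_snd.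
  - reflexivity.
Qed.

Lemma is_derive_ReIm_ext (f g : R -> C) s l :
  (forall t, f t = g t) -> is_derive_ReIm f s l -> is_derive_ReIm g s l.
Proof.
  intros Hfg [H1 H2]; split; eapply is_derive_ext; try eassumption;
    intros t; simpl; rewrite Hfg; reflexivity.
Qed.

Lemma is_derive_ReIm_minus (f g : R -> C) s l k :
  is_derive_ReIm f s l -> is_derive_ReIm g s k ->
  is_derive_ReIm (fun t => f t - g t)%C s (l - k)%C.
Proof.
  intros [H1 H2] [H3 H4]; split.
  - replace (Re (l - k)%C) with (Re l - Re k) by (unfold Re; simpl; ring).
    apply (is_derive_ext (fun t => Re (f t) - Re (g t))); [intros; unfold Re; simpl; ring|].
    exact (is_derive_minus _ _ s _ _ H1 H3).
  - replace (Im (l - k)%C) with (Im l - Im k) by (unfold Im; simpl; ring).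
    apply (is_derive_ext (fun t => Im (f t) - Im (g t))); [intros; unfold Im; simpl; ring|].
    exact (is_derive_minus _ _ s _ _ H2 H4).
Qed.

Lemma is_derive_Cmod2 (f : R -> C) s l :
  is_derive_ReIm f s l -> is_derive (fun t => Cmod (f t) ^ 2) s (2 * Cinner (f s) l).
Proof.
  intros [H1 H2].
  eapply is_derive_ext; [intros t; symmetry; apply Cmod2_alt|].
  replace (2 * Cinner (f s) l)
    with (INR 2 * Re l * Re (f s) ^ 1 + INR 2 * Im l * Im (f s) ^ 1)
    by (unfold Cinner; simpl; ring).
  exact (is_derive_plus _ _ s _ _ (is_derive_pow _ 2 s _ H1) (is_derive_pow _ 2 s _ H2)).
Qed.

Lemma is_derive_gap_term (x w : R -> C) dx dw s :
  is_derive_ReIm x s dx -> is_derive_ReIm w s dw ->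
  is_derive (fun t => Cmod (x t) ^ 2 * (1 + Cmod (w t) ^ 2)) s
    (2 * Cinner (x s) dx * (1 + Cmod (w s) ^ 2) + Cmod (x s) ^ 2 * (2 * Cinner (w s) dw)).
Proof.
  intros Hx Hw.
  pose proof (is_derive_plus _ _ s _ _ (is_derive_const 1 s) (is_derive_Cmod2 w s dw Hw)) as H1.
  pose proof (Derive.is_derive_mult _ _ s _ _ (is_derive_Cmod2 x s dx Hx) H1) as H.
  replace (Cmod (x s) ^ 2 * (2 * Cinner (w s) dw))
    with (Cmod (x s) ^ 2 * (0 + 2 * Cinner (w s) dw)) by ring.
  exact H.
Qed.

Lemma is_derive_weighted_gap (a b p q : R -> C) da db dp dq s :
  is_derive_ReIm a s da -> is_derive_ReIm b s db ->
  is_derive_ReIm p s dp -> is_derive_ReIm q s dq ->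
  is_derive (fun t => weighted_gap (a t) (b t) (p t) (q t)) s
    (2 * Cinner (a s - p s) (da - dp) * (1 + Cmod (q s) ^ 2)
     + Cmod (a s - p s) ^ 2 * (2 * Cinner (q s) dq)
     + (2 * Cinner (b s - q s) (db - dq) * (1 + Cmod (p s) ^ 2)
        + Cmod (b s - q s) ^ 2 * (2 * Cinner (p s) dp))).
Proof.
  intros Ha Hb Hp Hq.
  exact (is_derive_plus _ _ s _ _
    (is_derive_gap_term (fun t => a t - p t)%C q _ _ s
       (is_derive_ReIm_minus a p s da dp Ha Hp) Hq)
    (is_derive_gap_term (fun t => b t - q t)%C p _ _ s
       (is_derive_ReIm_minus b q s db dq Hb Hq) Hp)).
Qed.

Lemma solves_N_mass m al be wu wv : solves_N m al be wu wv ->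
  forall s, Cmod (wu s) ^ 2 + Cmod (wv s) ^ 2 = Cmod (wu 0) ^ 2 + Cmod (wv 0) ^ 2.
Proof.
  intros HN s.
  assert (Hd : forall t, is_derive (fun t => Cmod (wu t) ^ 2 + Cmod (wv t) ^ 2) t 0).
  { intros t; destruct (HN t) as [Hu Hv]; rewrite NL2_NL1 in Hv.
    replace 0 with (2 * Cinner (wu t) (NL1 m al be (wu t) (wv t))
                    + 2 * Cinner (wv t) (NL1 m al be (wv t) (wu t)))
      by (pose proof (Cinner_NL1_mass m al be (wu t) (wv t)); lra).
    exact (is_derive_plus _ _ t _ _ (is_derive_Cmod2 _ _ _ (is_derive_ReIm_of _ _ _ Hu))
                                    (is_derive_Cmod2 _ _ _ (is_derive_ReIm_of _ _ _ Hv))). }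
  assert (Hvar := bounded_variation _ (fun _ => 0) 0 0 s
                     (fun t _ => conj (Hd t) (Req_le _ _ Rabs_R0))).
  pose proof (Rabs_pos (s - 0)).
  apply Rabs_le_between in Hvar. lra.
Qed.

Lemma exp_le_compat x y : x <= y -> exp x <= exp y.
Proof. intros [H|H]; [left; apply exp_increasing, H | right; rewrite H; reflexivity]. Qed.

Lemma gronwall_linear (phi dphi : R -> R) (K c tau : R) :
  0 <= K -> 0 <= c ->
  (forall s, 0 <= s <= tau -> is_derive phi s (dphi s)) ->
  (forall s, 0 <= s <= tau -> dphi s <= K * phi s + c) ->
  forall s, 0 <= s <= tau -> phi s <= exp (K * s) * (phi 0 + c * s).
Proof.
  intros HK Hc Hd Hb s Hs.
  destruct (Req_dec s 0) as [->|Hs0]; [rewrite Rmult_0_r, exp_0; lra|].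
  (* psi = exp(-K t) phi - c t is nonincreasing *)
  set (psi t := exp (- K * t) * phi t - c * t).
  set (dpsi t := (- K) * exp (- K * t) * phi t + exp (- K * t) * dphi t - c).
  assert (Hdpsi : forall t, 0 <= t <= tau -> is_derive psi t (dpsi t)).
  { intros t Ht; unfold psi, dpsi.
    apply (is_derive_minus (fun t => exp (- K * t) * phi t) (fun t => c * t)).
    - apply (Derive.is_derive_mult (fun t => exp (- K * t)) phi).
      + apply (is_derive_comp exp (fun t => - K * t)); [apply is_derive_exp|].
        auto_derive; auto; ring.
      + auto.
    - auto_derive; auto; ring. }
  destruct (MVT_gen psi 0 s dpsi) as [xi [Hxi Heq]];
    rewrite Rmin_left, Rmax_right in * by lra.
  - intros x Hx; apply Hdpsi; lra.
  - intros x Hx; apply derivable_continuous_pt; exists (dpsi x).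
    apply is_derive_Reals, Hdpsi; lra.
  - assert (Hneg : dpsi xi <= 0).
    { unfold dpsi; specialize (Hb xi ltac:(lra)).
      assert (0 < exp (- K * xi)) by apply exp_pos.
      assert (exp (- K * xi) <= 1) by (rewrite <- exp_0; apply exp_le_compat; nra).
      nra. }
    assert (Hmono : psi s <= psi 0) by nra.
    unfold psi in Hmono; rewrite Rmult_0_r, exp_0, Rmult_0_r in Hmono.
    assert (Hexp : exp (K * s) * exp (- K * s) = 1)
      by (rewrite <- exp_plus; replace (K * s + - K * s) with 0 by ring; apply exp_0).
    assert (0 < exp (K * s)) by apply exp_pos.
    replace (phi s) with (exp (K * s) * (exp (- K * s) * phi s))
      by (rewrite <- Rmult_assoc, Hexp; ring).
    apply Rmult_le_compat_l; lra.
Qed.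

Lemma weighted_gap_le m al be M E K tau (a b da db p q : R -> C) :
  0 <= m -> 0 <= E ->
  solves_N m al be p q -> Cmod (p 0) ^ 2 + Cmod (q 0) ^ 2 <= K ->
  (forall s, 0 <= s <= tau ->
     is_derive_ReIm a s (da s) /\ is_derive_ReIm b s (db s) /\
     Cmod (a s) <= M /\ Cmod (b s) <= M /\
     Cmod (da s - NL1 m al be (a s) (b s)) <= E /\
     Cmod (db s - NL2 m al be (a s) (b s)) <= E) ->
  forall s, 0 <= s <= tau ->
  weighted_gap (a s) (b s) (p s) (q s)
  <= exp (2 * gap_rate m (Rabs al) (Rabs be) M * (1 + K) * s)
     * (weighted_gap (a 0) (b 0) (p 0) (q 0) + 2 * (1 + K) * E ^ 2 * s).
Proof.
  intros Hm HE HN HK Hab s Hs.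
  assert (HK0 : 0 <= K)
    by (pose proof (pow2_ge_0 (Cmod (p 0))); pose proof (pow2_ge_0 (Cmod (q 0))); lra).
  replace (2 * gap_rate m (Rabs al) (Rabs be) M * (1 + K))
    with (2 * (gap_rate m (Rabs al) (Rabs be) M * (1 + K))) by ring.
  refine (gronwall_linear (fun s => weighted_gap (a s) (b s) (p s) (q s)) (fun s =>
    2 * Cinner (a s - p s) (da s - NL1 m al be (p s) (q s)) * (1 + Cmod (q s) ^ 2)
    + Cmod (a s - p s) ^ 2 * (2 * Cinner (q s) (NL2 m al be (p s) (q s)))
    + (2 * Cinner (b s - q s) (db s - NL2 m al be (p s) (q s)) * (1 + Cmod (p s) ^ 2)
       + Cmod (b s - q s) ^ 2 * (2 * Cinner (p s) (NL1 m al be (p s) (q s)))))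
    _ _ tau _ _ _ _ s Hs).
  - pose proof (gap_rate_nonneg m (Rabs al) (Rabs be) M Hm (Rabs_pos al) (Rabs_pos be)); nra.
  - pose proof (pow2_ge_0 E); nra.
  - intros r Hr; destruct (Hab r Hr) as (Ha & Hb & _); destruct (HN r) as [Hp Hq].
    apply is_derive_weighted_gap; auto using is_derive_ReIm_of.
  - clear s Hs; intros s Hs; destruct (Hab s Hs) as (_ & _ & HaM & HbM & Hra & Hrb).
    assert (HKs : Cmod (p s) ^ 2 + Cmod (q s) ^ 2 <= K)
      by (rewrite (solves_N_mass _ _ _ _ _ HN s); exact HK).
    rewrite !NL2_NL1 in *.
    pose proof (gap_rate_half m al be M K E (a s) (b s) (p s) (q s) (da s) Hm HE HaM HbM HKs Hra).
    pose proof (gap_rate_half m al be M K E (b s) (a s) (q s) (p s) (db s) Hm HE HbM HaM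
                  ltac:(lra) Hrb) as Hhalf.
    rewrite <- weighted_gap_swap in Hhalf.
    lra.
Qed.

Lemma solves_N_unique m al be (u1 v1 u2 v2 : R -> C) :
  0 <= m -> solves_N m al be u1 v1 -> solves_N m al be u2 v2 ->
  u1 0 = u2 0 -> v1 0 = v2 0 -> forall s, 0 <= s -> u1 s = u2 s /\ v1 s = v2 s.
Proof.
  intros Hm H1 H2 E1 E2 s Hs.
  set (K := Cmod (u2 0) ^ 2 + Cmod (v2 0) ^ 2).
  assert (Hzero : forall z : C, (z - z)%C = 0%C) by (intros; ring).
  assert (Hgap := weighted_gap_le m al be (1 + K) 0 K s u1 v1
    (fun r => NL1 m al be (u1 r) (v1 r)) (fun r => NL2 m al be (u1 r) (v1 r)) u2 v2
    Hm (Rle_refl 0) H2 (Rle_refl K)).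
  assert (Hbound : forall r, Cmod (u1 r) <= 1 + K /\ Cmod (v1 r) <= 1 + K).
  { intros r; pose proof (solves_N_mass _ _ _ _ _ H1 r) as Hmass; rewrite E1, E2 in Hmass.
    pose proof (pow2_ge_0 (Cmod (u1 r))); pose proof (pow2_ge_0 (Cmod (v1 r))).
    pose proof (pow2_ge_0 (Cmod (u1 r) - 1)); pose proof (pow2_ge_0 (Cmod (v1 r) - 1)).
    fold K in Hmass; split; nra. }
  specialize (Hgap ltac:(intros r _; destruct (H1 r), (Hbound r);
                         rewrite !Hzero, Cmod_0; auto 7 using is_derive_ReIm_of, Rle_refl)
              s ltac:(lra)).
  unfold weighted_gap at 2 in Hgap; rewrite E1, E2, !Hzero, Cmod_0 in Hgap.
  unfold weighted_gap in Hgap.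
  pose proof (pow2_ge_0 (Cmod (u1 s - u2 s))); pose proof (pow2_ge_0 (Cmod (v1 s - v2 s))).
  pose proof (pow2_ge_0 (Cmod (u2 s))); pose proof (pow2_ge_0 (Cmod (v2 s))).
  assert (Hu : Cmod (u1 s - u2 s) = 0) by (pose proof (Cmod_ge_0 (u1 s - u2 s)); nra).
  assert (Hv : Cmod (v1 s - v2 s) = 0) by (pose proof (Cmod_ge_0 (v1 s - v2 s)); nra).
  apply Cmod_eq_0 in Hu; apply Cmod_eq_0 in Hv.
  split; [rewrite <- (Cplus_0_r (u2 s)), <- Hu | rewrite <- (Cplus_0_r (v2 s)), <- Hv]; ring.
Qed.

Lemma sum_f_R0_le_term (g : nat -> R) n i :
  (forall k, 0 <= g k) -> (i <= n)%nat -> g i <= sum_f_R0 g n.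
Proof.
  intros Hg; induction n as [|n IH]; intros Hi.
  - replace i with 0%nat by lia; simpl; lra.
  - rewrite tech5; destruct (Nat.eq_dec i (S n)) as [->|Hne].
    + pose proof (cond_pos_sum g n Hg); lra.
    + specialize (IH ltac:(lia)); pose proof (Hg (S n)); lra.
Qed.

Lemma sum_f_R0_le_mono (g : nat -> R) n n' :
  (forall k, 0 <= g k) -> (n <= n')%nat -> sum_f_R0 g n <= sum_f_R0 g n'.
Proof.
  intros Hg Hn; induction Hn as [|n' _ IH]; [lra|].
  rewrite tech5; pose proof (Hg (S n')); lra.
Qed.

Lemma sum_f_R0_shift2_le (g : nat -> R) n :
  (forall k, 0 <= g k) -> sum_f_R0 (fun k => g (S (S k))) n <= sum_f_R0 g (S (S n)).
Proof.
  intros Hg; induction n as [|n IH].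
  - simpl; pose proof (Hg 0%nat); pose proof (Hg 1%nat); lra.
  - rewrite tech5, (tech5 g (S (S n))); lra.
Qed.

Lemma sumZ_sym_le_term (f : Z -> R) N k :
  (forall k, 0 <= f k) -> (- Z.of_nat N <= k <= Z.of_nat N)%Z -> f k <= sumZ_sym f N.
Proof.
  intros Hf Hk; unfold sumZ_sym.
  replace (f k) with (f (Z.of_nat (Z.to_nat (k + Z.of_nat N)) - Z.of_nat N)%Z)
    by (f_equal; rewrite Z2Nat.id by lia; lia).
  apply (sum_f_R0_le_term (fun i => f (Z.of_nat i - Z.of_nat N)%Z)); [intros; apply Hf | lia].
Qed.

Lemma sumZ_sym_shift_le (G H : Z -> R) N :
  (forall k, 0 <= G k) -> (forall k, 0 <= H k) ->
  sumZ_sym (fun k => G (k - 1)%Z + H (k + 1)%Z) N <= sumZ_sym (fun k => G k + H k) (S N).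
Proof.
  intros HG HH; unfold sumZ_sym; rewrite !sum_plus.
  apply Rplus_le_compat.
  - apply Rle_trans with (sum_f_R0 (fun i => G (Z.of_nat i - Z.of_nat (S N))%Z) (2 * N)).
    + right; apply sum_eq; intros i _; f_equal; lia.
    + apply sum_f_R0_le_mono; [intros; apply HG | lia].
  - apply Rle_trans
      with (sum_f_R0 (fun i => H (Z.of_nat (S (S i)) - Z.of_nat (S N))%Z) (2 * N)).
    + right; apply sum_eq; intros i _; f_equal; lia.
    + replace (2 * S N)%nat with (S (S (2 * N))) by lia.
      apply (sum_f_R0_shift2_le (fun i => H (Z.of_nat i - Z.of_nat (S N))%Z)); intros; apply HH.
Qed.

Lemma at_left_limit_eventually_const (f : R -> C) a L c eps : 0 < eps ->
  filterlim f (at_left a) (locally L) -> (forall t, a - eps < t < a -> f t = c) -> L = c.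
Proof.
  intros He Hl Hc.
  apply (filterlim_locally_unique (F := at_left a) f L c Hl).
  apply (filterlim_ext_loc (fun _ => c) f); [|apply filterlim_const].
  exists (mkposreal eps He); intros y Hy Hya; symmetry; apply Hc.
  unfold ball in Hy; simpl in Hy; unfold AbsRing_ball, abs, minus, plus, opp in Hy; simpl in Hy.
  apply Rabs_lt_between in Hy; lra.
Qed.

Definition cellwise_constant (tau : R) (U V : R -> R -> C) (t : R) (cu cv : Z -> C) : Prop :=
  forall k x, IZR k * tau < x < (IZR k + 1) * tau -> U x t = cu k /\ V x t = cv k.

Definition cell_mass (cu cv : Z -> C) (k : Z) : R := Cmod (cu k) ^ 2 + Cmod (cv k) ^ 2.

Section Scheme.

Variables (m al be tau : R) (u0 v0 : Z -> C) (U V : R -> R -> C).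
Hypotheses (Hm : 0 <= m) (Htau : 0 < tau) (HTS : time_splitting m al be tau u0 v0 U V).

Lemma transport_left_limit_U n cu cv x k L :
  cellwise_constant tau U V (INR n * tau) cu cv ->
  IZR k * tau <= x - tau < (IZR k + 1) * tau ->
  filterlim (fun t => U x t) (at_left ((INR n + 1) * tau)) (locally L) -> L = cu k.
Proof.
  intros Hc Hx Hl; destruct HTS as (_ & Htr & _).
  assert (Heps : 0 < Rmin tau ((IZR k + 1) * tau - (x - tau))) by (apply Rmin_glb_lt; lra).
  pose proof (Rmin_l tau ((IZR k + 1) * tau - (x - tau))).
  pose proof (Rmin_r tau ((IZR k + 1) * tau - (x - tau))).
  set (eps := Rmin tau ((IZR k + 1) * tau - (x - tau))) in *.
  apply (at_left_limit_eventually_const _ _ _ _ eps Heps Hl); intros t Ht.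
  rewrite (proj1 (Htr n x t ltac:(lra))).
  apply Hc; lra.
Qed.

Lemma transport_left_limit_V n cu cv x k L :
  cellwise_constant tau U V (INR n * tau) cu cv ->
  IZR k * tau < x + tau <= (IZR k + 1) * tau ->
  filterlim (fun t => V x t) (at_left ((INR n + 1) * tau)) (locally L) -> L = cv k.
Proof.
  intros Hc Hx Hl; destruct HTS as (_ & Htr & _).
  assert (Heps : 0 < Rmin tau (x + tau - IZR k * tau)) by (apply Rmin_glb_lt; lra).
  pose proof (Rmin_l tau (x + tau - IZR k * tau)).
  pose proof (Rmin_r tau (x + tau - IZR k * tau)).
  set (eps := Rmin tau (x + tau - IZR k * tau)) in *.
  apply (at_left_limit_eventually_const _ _ _ _ eps Heps Hl); intros t Ht.
  rewrite (proj2 (Htr n x t ltac:(lra))).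
  apply Hc; lra.
Qed.

Lemma splitting_step n cu cv k x :
  cellwise_constant tau U V (INR n * tau) cu cv ->
  IZR k * tau < x < (IZR k + 1) * tau ->
  exists wu wv, solves_N m al be wu wv /\ wu 0 = cu (k - 1)%Z /\ wv 0 = cv (k + 1)%Z /\
    U x (INR (S n) * tau) = wu tau /\ V x (INR (S n) * tau) = wv tau.
Proof.
  intros Hc Hx; destruct HTS as (_ & _ & Hstep).
  destruct (Hstep n x) as (Lu & Lv & wu & wv & Hlu & Hlv & HN & Hu0 & Hv0 & HUx & HVx).
  exists wu, wv; rewrite S_INR; refine (conj HN (conj _ (conj _ (conj HUx HVx)))).
  - rewrite Hu0; apply (transport_left_limit_U n cu cv x (k - 1) Lu Hc); auto.
    rewrite minus_IZR; simpl; lra.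
  - rewrite Hv0; apply (transport_left_limit_V n cu cv x (k + 1) Lv Hc); auto.
    rewrite plus_IZR; simpl; lra.
Qed.

Lemma splitting_cells n : exists cu cv,
  cellwise_constant tau U V (INR n * tau) cu cv /\
  forall N, sumZ_sym (cell_mass cu cv) N <= sumZ_sym (cell_mass u0 v0) (N + n).
Proof.
  induction n as [|n [cu [cv [Hc Hmass]]]].
  - exists u0, v0; split.
    + intros k x Hx; rewrite Rmult_0_l; apply (proj1 HTS); lra.
    + intros N; rewrite Nat.add_0_r; lra.
  - set (mid k := (IZR k + / 2) * tau).
    assert (Hmid : forall k, IZR k * tau < mid k < (IZR k + 1) * tau) by (intros; unfold mid; nra).
    exists (fun k => U (mid k) (INR (S n) * tau)), (fun k => V (mid k) (INR (S n) * tau)); split.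
    + intros k x Hx.
      destruct (splitting_step n cu cv k x Hc Hx) as (wu & wv & HN & Hu & Hv & -> & ->).
      destruct (splitting_step n cu cv k (mid k) Hc (Hmid k))
        as (wu' & wv' & HN' & Hu' & Hv' & -> & ->).
      apply (solves_N_unique m al be wu wv wu' wv'); auto; [congruence | congruence | lra].
    + intros N; eapply Rle_trans.
      2: { replace (N + S n)%nat with (S N + n)%nat by lia; apply Hmass. }
      eapply Rle_trans.
      2: { apply (sumZ_sym_shift_le (fun k => Cmod (cu k) ^ 2) (fun k => Cmod (cv k) ^ 2));
           intros; apply pow2_ge_0. }
      right; unfold sumZ_sym, cell_mass; apply sum_eq; intros i _.
      destruct (splitting_step n cu cv _ _ Hc (Hmid (Z.of_nat i - Z.of_nat N)%Z))
        as (wu & wv & HN & Hu & Hv & -> & ->).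
      rewrite (solves_N_mass _ _ _ _ _ HN tau), Hu, Hv; reflexivity.
Qed.

Lemma splitting_left_limit_mass c0 n j Lu Lv :
  (forall N, sumZ_sym (cell_mass u0 v0) N * tau <= c0) ->
  filterlim (fun t => U ((IZR j + 1) * tau) t) (at_left ((INR n + 1) * tau)) (locally Lu) ->
  filterlim (fun t => V ((IZR j + 1) * tau) t) (at_left ((INR n + 1) * tau)) (locally Lv) ->
  Cmod Lu ^ 2 + Cmod Lv ^ 2 <= 2 * c0 / tau.
Proof.
  intros Hsum Hlu Hlv.
  destruct (splitting_cells n) as [cu [cv [Hc Hmass]]].
  assert (Eu : Lu = cu j)
    by (apply (transport_left_limit_U n cu cv ((IZR j + 1) * tau) j Lu Hc); auto; lra).
  assert (Ev : Lv = cv (j + 1)%Z)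
    by (apply (transport_left_limit_V n cu cv ((IZR j + 1) * tau) (j + 1) Lv Hc); auto;
        rewrite plus_IZR; simpl; lra).
  set (N := Z.to_nat (Z.abs j + 1)).
  assert (Hpos : forall k, 0 <= cell_mass cu cv k)
    by (intros; unfold cell_mass;
        pose proof (pow2_ge_0 (Cmod (cu k))); pose proof (pow2_ge_0 (Cmod (cv k))); lra).
  assert (Hj : cell_mass cu cv j <= sumZ_sym (cell_mass cu cv) N)
    by (apply sumZ_sym_le_term; auto; unfold N; lia).
  assert (Hj1 : cell_mass cu cv (j + 1) <= sumZ_sym (cell_mass cu cv) N)
    by (apply sumZ_sym_le_term; auto; unfold N; lia).
  assert (Htot : sumZ_sym (cell_mass cu cv) N <= c0 / tau).
  { apply (Rmult_le_reg_r tau); [lra|]; unfold Rdiv; rewrite Rmult_assoc, Rinv_l by lra.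
    eapply Rle_trans; [apply Rmult_le_compat_r; [lra | apply Hmass]|].
    rewrite Rmult_1_r; apply Hsum. }
  unfold cell_mass in Hj, Hj1, Htot; rewrite Eu, Ev.
  pose proof (pow2_ge_0 (Cmod (cu (j + 1)%Z))); pose proof (pow2_ge_0 (Cmod (cv j))).
  unfold Rdiv in *; lra.
Qed.

End Scheme.

Lemma smooth2_line_derive_proj (pr : C -> R) (f fx ft : R -> R -> C) x0 t0 cx ct s :
  (forall z : C, continuous pr z) ->
  (forall (g : R -> C) x l, is_derive g x l -> is_derive (fun t => pr (g t)) x (pr l)) ->
  smooth2 f ->
  (forall x t, is_derive (fun y => f y t) x (fx x t) /\ is_derive (fun r => f x r) t (ft x t)) ->
  is_derive (fun r => pr (f (x0 + cx * r) (t0 + ct * r))) s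
    (cx * pr (fx (x0 + cx * s) (t0 + ct * s)) + ct * pr (ft (x0 + cx * s) (t0 + ct * s))).
Proof.
  intros Hpc Hpd [D [HD0 HD]] Hd.
  set (X := x0 + cx * s); set (T := t0 + ct * s).
  (* the x-derivative of f is D 1 0, which is jointly continuous *)
  assert (Hfx : forall x t, pr (D 1%nat 0%nat x t) = pr (fx x t)).
  { intros x t; destruct (HD 0%nat 0%nat x t) as [H1 _]; rewrite HD0 in H1.
    apply Hpd, is_derive_unique in H1.
    rewrite <- H1; exact (is_derive_unique _ _ _ (Hpd _ _ _ (proj1 (Hd x t)))). }
  assert (Hcont : continuous (fun u : R * R => pr (fx (fst u) (snd u))) (X, T)).
  { apply (continuous_ext (fun u : R * R => pr (D 1%nat 0%nat (fst u) (snd u))));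
      [intros; apply Hfx|].
    apply (continuous_comp (fun u : R * R => D 1%nat 0%nat (fst u) (snd u)) pr);
      [apply HD | apply Hpc]. }
  assert (Hdiff : differentiable_pt_lim (fun x t => pr (f x t)) X T (pr (fx X T)) (pr (ft X T))).
  { apply filterdiff_differentiable_pt_lim,
      (is_derive_filterdiff (fun x t => pr (f x t)) X T (fun x t => pr (fx x t))).
    - apply filter_forall; intros u; apply Hpd, Hd.
    - apply Hpd, Hd.
    - exact Hcont. }
  apply is_derive_Reals.
  replace (cx * pr (fx X T) + ct * pr (ft X T)) with (pr (fx X T) * cx + pr (ft X T) * ct) by ring.
  apply (derivable_pt_lim_comp_2d (fun x t => pr (f x t))
           (fun r => x0 + cx * r) (fun r => t0 + ct * r));
    [exact Hdiff| |];
    apply is_derive_Reals; auto_derive; auto; ring.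
Qed.

Lemma smooth2_line_derive (f fx ft : R -> R -> C) x0 t0 cx ct s :
  smooth2 f ->
  (forall x t, is_derive (fun y => f y t) x (fx x t) /\ is_derive (fun r => f x r) t (ft x t)) ->
  is_derive_ReIm (fun r => f (x0 + cx * r) (t0 + ct * r)) s
    (Cplus (Cmult cx (fx (x0 + cx * s) (t0 + ct * s))) (Cmult ct (ft (x0 + cx * s) (t0 + ct * s)))).
Proof.
  intros Hs Hd; split.
  - replace (Re _) with (cx * Re (fx (x0 + cx * s) (t0 + ct * s))
                         + ct * Re (ft (x0 + cx * s) (t0 + ct * s)))
      by (unfold Re; simpl; ring).
    apply (smooth2_line_derive_proj Re); auto.
    + intros z; apply continuous_fst.
    + intros g x l H; apply (is_derive_ReIm_of g x l H).
  - replace (Im _) with (cx * Im (fx (x0 + cx * s) (t0 + ct * s))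
                         + ct * Im (ft (x0 + cx * s) (t0 + ct * s)))
      by (unfold Im; simpl; ring).
    apply (smooth2_line_derive_proj Im); auto.
    + intros z; apply continuous_snd.
    + intros g x l H; apply (is_derive_ReIm_of g x l H).
Qed.

Lemma Cmod_le_Re_Im z : Cmod z <= Rabs (Re z) + Rabs (Im z).
Proof.
  replace z with (RtoC (Re z) + Ci * RtoC (Im z))%C at 1
    by (apply C_eq_ReIm; unfold Re, Im; simpl; ring).
  eapply Rle_trans; [apply Cmod_triangle|].
  rewrite Cmod_mult, Cmod_Ci, !Cmod_R; lra.
Qed.

Lemma Cmod_sub_le_derive_bound (g dg : R -> C) B x1 x2 :
  (forall x, is_derive g x (dg x)) -> (forall x, Cmod (dg x) <= B) ->
  Cmod (g x1 - g x2) <= 2 * B * Rabs (x1 - x2).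
Proof.
  intros Hd Hb.
  assert (Hre : Rabs (Re (g x1) - Re (g x2)) <= B * Rabs (x1 - x2)).
  { apply (bounded_variation (fun x => Re (g x)) (fun x => Re (dg x))); intros t _; split.
    - apply (is_derive_ReIm_of g t (dg t) (Hd t)).
    - eapply Rle_trans; [apply re_le_Cmod | apply Hb]. }
  assert (Him : Rabs (Im (g x1) - Im (g x2)) <= B * Rabs (x1 - x2)).
  { apply (bounded_variation (fun x => Im (g x)) (fun x => Im (dg x))); intros t _; split.
    - apply (is_derive_ReIm_of g t (dg t) (Hd t)).
    - eapply Rle_trans; [eapply Rle_trans; [apply Rmax_r | apply Rmax_Cmod] | apply Hb]. }
  eapply Rle_trans; [apply Cmod_le_Re_Im|].
  replace (Re (g x1 - g x2)%C) with (Re (g x1) - Re (g x2)) by (unfold Re; simpl; ring).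
  replace (Im (g x1 - g x2)%C) with (Im (g x1) - Im (g x2)) by (unfold Im; simpl; ring).
  lra.
Qed.

Section SmoothSolution.

Variables (m al be T M MM : R) (uh vh uhx uht vhx vht : R -> R -> C).
Hypotheses (Hm : 0 <= m) (Hsu : smooth2 uh) (Hsv : smooth2 vh).
Hypothesis Hder : forall x t,
  is_derive (fun y => uh y t) x (uhx x t) /\ is_derive (fun s => uh x s) t (uht x t) /\
  is_derive (fun y => vh y t) x (vhx x t) /\ is_derive (fun s => vh x s) t (vht x t).
Hypothesis Hpde : forall x t, 0 <= t <= T ->
  Cplus (uht x t) (uhx x t) = NL1 m al be (uh x t) (vh x t) /\
  Cminus (vht x t) (vhx x t) = NL2 m al be (uh x t) (vh x t).
Hypothesis HM : forall x t, 0 <= t <= T -> Cmod (uh x t) <= M /\ Cmod (vh x t) <= M.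
Hypothesis HMM : forall x t, 0 <= t <= T -> Cmod (uhx x t) <= MM /\ Cmod (vhx x t) <= MM.

Lemma characteristic_derive_u x0 t0 r :
  is_derive_ReIm (fun s => uh (x0 + s) (t0 + s)) r
    (Cplus (uht (x0 + r) (t0 + r)) (uhx (x0 + r) (t0 + r))).
Proof.
  apply (is_derive_ReIm_ext (fun s => uh (x0 + 1 * s) (t0 + 1 * s)));
    [intros s; rewrite !Rmult_1_l; reflexivity|].
  replace (Cplus (uht (x0 + r) (t0 + r)) (uhx (x0 + r) (t0 + r)))
    with (Cplus (Cmult 1 (uhx (x0 + 1 * r) (t0 + 1 * r))) (Cmult 1 (uht (x0 + 1 * r) (t0 + 1 * r))))
    by (rewrite !Rmult_1_l; ring).
  apply smooth2_line_derive; auto.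
  intros x t; destruct (Hder x t) as (? & ? & _); auto.
Qed.

Lemma characteristic_derive_v y0 t0 r :
  is_derive_ReIm (fun s => vh (y0 - s) (t0 + s)) r
    (Cminus (vht (y0 - r) (t0 + r)) (vhx (y0 - r) (t0 + r))).
Proof.
  apply (is_derive_ReIm_ext (fun s => vh (y0 + -1 * s) (t0 + 1 * s)));
    [intros s; f_equal; ring|].
  replace (Cminus (vht (y0 - r) (t0 + r)) (vhx (y0 - r) (t0 + r)))
    with (Cplus (Cmult (-1) (vhx (y0 + -1 * r) (t0 + 1 * r)))
                (Cmult 1 (vht (y0 + -1 * r) (t0 + 1 * r))))
    by (replace (y0 + -1 * r) with (y0 - r) by ring; rewrite Rmult_1_l; ring).
  apply smooth2_line_derive; auto.
  intros x t; destruct (Hder x t) as (_ & _ & ? & ?); auto.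
Qed.

Lemma characteristic_residual x0 y0 t0 tau r :
  0 <= t0 -> t0 + tau <= T -> y0 = x0 + 2 * tau -> 0 <= r <= tau ->
  Cmod (Cplus (uht (x0 + r) (t0 + r)) (uhx (x0 + r) (t0 + r))
        - NL1 m al be (uh (x0 + r) (t0 + r)) (vh (y0 - r) (t0 + r)))
    <= nl_lip m al be M * (4 * MM * tau) /\
  Cmod (Cminus (vht (y0 - r) (t0 + r)) (vhx (y0 - r) (t0 + r))
        - NL2 m al be (uh (x0 + r) (t0 + r)) (vh (y0 - r) (t0 + r)))
    <= nl_lip m al be M * (4 * MM * tau).
Proof.
  intros Ht0 HtT Hy0 Hr.
  set (X1 := x0 + r); set (X2 := y0 - r); set (T1 := t0 + r).
  assert (HT1 : 0 <= T1 <= T) by (unfold T1; lra).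
  assert (HX : Rabs (X1 - X2) <= 2 * tau) by (unfold X1, X2; apply Rabs_le; lra).
  assert (HX' : Rabs (X2 - X1) <= 2 * tau) by (unfold X1, X2; apply Rabs_le; lra).
  destruct (HM X1 T1 HT1) as [Hu1 Hv1]; destruct (HM X2 T1 HT1) as [Hu2 Hv2].
  destruct (Hpde X1 T1 HT1) as [Hpu _]; destruct (Hpde X2 T1 HT1) as [_ Hpv].
  assert (HMM0 : 0 <= MM)
    by (pose proof (Cmod_ge_0 (uhx X1 T1)); pose proof (proj1 (HMM X1 T1 HT1)); lra).
  assert (HL := nl_lip_nonneg m al be M Hm).
  assert (Hvx : Cmod (vh X1 T1 - vh X2 T1) <= 4 * MM * tau).
  { eapply Rle_trans;
      [apply (Cmod_sub_le_derive_bound (fun x => vh x T1) (fun x => vhx x T1) MM)|].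
    - intros x; apply (Hder x T1).
    - intros x; apply (HMM x T1 HT1).
    - nra. }
  assert (Hux : Cmod (uh X2 T1 - uh X1 T1) <= 4 * MM * tau).
  { eapply Rle_trans;
      [apply (Cmod_sub_le_derive_bound (fun x => uh x T1) (fun x => uhx x T1) MM)|].
    - intros x; apply (Hder x T1).
    - intros x; apply (HMM x T1 HT1).
    - nra. }
  split.
  - rewrite Hpu.
    eapply Rle_trans; [apply (Cmod_NL1_sub_r m al be M); auto|].
    apply Rmult_le_compat_l; auto.
  - rewrite Hpv, !NL2_NL1.
    eapply Rle_trans; [apply (Cmod_NL1_sub_r m al be M); auto|].
    apply Rmult_le_compat_l; auto.
Qed.

Lemma characteristic_weighted_gap_le x0 y0 t0 tau K (wu wv : R -> C) :
  0 <= t0 -> 0 <= tau -> t0 + tau <= T -> y0 = x0 + 2 * tau ->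
  solves_N m al be wu wv -> Cmod (wu 0) ^ 2 + Cmod (wv 0) ^ 2 <= K ->
  forall s, 0 <= s <= tau ->
  weighted_gap (uh (x0 + s) (t0 + s)) (vh (y0 - s) (t0 + s)) (wu s) (wv s)
  <= exp (2 * gap_rate m (Rabs al) (Rabs be) M * (1 + K) * s)
     * (weighted_gap (uh (x0 + 0) (t0 + 0)) (vh (y0 - 0) (t0 + 0)) (wu 0) (wv 0)
        + 2 * (1 + K) * (nl_lip m al be M * (4 * MM * tau)) ^ 2 * s).
Proof.
  intros Ht0 Htau HtT Hy0 HN HK.
  assert (HMM0 : 0 <= MM)
    by (pose proof (Cmod_ge_0 (uhx 0 t0)); pose proof (proj1 (HMM 0 t0 ltac:(lra))); lra).
  apply (weighted_gap_le m al be M _ K tau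
    (fun r => uh (x0 + r) (t0 + r)) (fun r => vh (y0 - r) (t0 + r))
    (fun r => Cplus (uht (x0 + r) (t0 + r)) (uhx (x0 + r) (t0 + r)))
    (fun r => Cminus (vht (y0 - r) (t0 + r)) (vhx (y0 - r) (t0 + r))) wu wv Hm); auto.
  - pose proof (nl_lip_nonneg m al be M Hm); apply Rmult_le_pos; nra.
  - intros r Hr; assert (HT1 : 0 <= t0 + r <= T) by lra.
    split; [apply characteristic_derive_u|].
    split; [apply characteristic_derive_v|].
    split; [apply (HM _ _ HT1)|].
    split; [apply (HM _ _ HT1)|].
    apply characteristic_residual; auto.
Qed.

End SmoothSolution.

Definition splitting_C2 (m al be c0 M : R) : R :=
  exp (2 * gap_rate m (Rabs al) (Rabs be) M * (1 + 2 * c0)).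

Definition splitting_C3 (m al be c0 M : R) : R :=
  splitting_C2 m al be c0 M * (1 + 2 * c0) * (32 * nl_lip m al be M ^ 2) + 1.

Lemma splitting_C3_pos m al be c0 M : 0 < c0 -> 0 < splitting_C3 m al be c0 M.
Proof.
  intros Hc0; unfold splitting_C3, splitting_C2.
  pose proof (exp_pos (2 * gap_rate m (Rabs al) (Rabs be) M * (1 + 2 * c0))).
  assert (0 <= 32 * nl_lip m al be M ^ 2) by (pose proof (pow2_ge_0 (nl_lip m al be M)); lra).
  apply Rplus_le_lt_0_compat; [apply Rmult_le_pos; [apply Rmult_le_pos|]|]; lra.
Qed.

Lemma splitting_gronwall_bound A L c0 MM tau s G0 :
  0 <= A -> 0 <= L -> 0 < c0 -> 0 <= MM -> 0 < tau < 1 -> 0 <= s <= tau -> 0 <= G0 ->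
  exp (2 * A * (1 + 2 * c0 / tau) * s)
    * (G0 + 2 * (1 + 2 * c0 / tau) * (L * (4 * MM * tau)) ^ 2 * s)
  <= exp (2 * A * (1 + 2 * c0)) * G0
     + (exp (2 * A * (1 + 2 * c0)) * (1 + 2 * c0) * (32 * L ^ 2) + 1) * MM ^ 2 * tau.
Proof.
  intros HA HL Hc0 HMM Htau Hs HG0.
  (* the mesh-dependent bound 2 c0 / tau on the mass is compensated by s <= tau *)
  assert (Hk0 : 0 <= 2 * c0 / tau)
    by (unfold Rdiv; apply Rmult_le_pos; [lra | apply Rlt_le, Rinv_0_lt_compat; lra]).
  assert (Hktau : 2 * c0 / tau * tau = 2 * c0) by (field; lra).
  assert (Hks : (1 + 2 * c0 / tau) * s <= 1 + 2 * c0) by nra.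
  assert (Hks0 : 0 <= (1 + 2 * c0 / tau) * s) by nra.
  set (C2 := exp (2 * A * (1 + 2 * c0))).
  assert (HC2 : 0 < C2) by apply exp_pos.
  assert (Hexp : exp (2 * A * (1 + 2 * c0 / tau) * s) <= C2)
    by (apply exp_le_compat; rewrite Rmult_assoc; apply Rmult_le_compat_l; lra).
  assert (Hsrc : 2 * (1 + 2 * c0 / tau) * (L * (4 * MM * tau)) ^ 2 * s
                 <= (1 + 2 * c0) * (32 * L ^ 2) * (MM ^ 2 * tau)).
  { replace (2 * (1 + 2 * c0 / tau) * (L * (4 * MM * tau)) ^ 2 * s)
      with ((1 + 2 * c0 / tau) * s * (32 * L ^ 2 * MM ^ 2 * tau ^ 2)) by ring.
    assert (H32 : 0 <= 32 * L ^ 2 * MM ^ 2)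
      by (pose proof (pow2_ge_0 L); pose proof (pow2_ge_0 MM); nra).
    apply Rle_trans with ((1 + 2 * c0) * (32 * L ^ 2 * MM ^ 2 * tau ^ 2));
      [apply Rmult_le_compat_r; nra|].
    replace ((1 + 2 * c0) * (32 * L ^ 2) * (MM ^ 2 * tau))
      with ((1 + 2 * c0) * (32 * L ^ 2 * MM ^ 2) * tau) by ring.
    replace ((1 + 2 * c0) * (32 * L ^ 2 * MM ^ 2 * tau ^ 2))
      with ((1 + 2 * c0) * (32 * L ^ 2 * MM ^ 2) * tau ^ 2) by ring.
    apply Rmult_le_compat_l; nra. }
  assert (Hsrc0 : 0 <= 2 * (1 + 2 * c0 / tau) * (L * (4 * MM * tau)) ^ 2 * s).
  { replace (2 * (1 + 2 * c0 / tau) * (L * (4 * MM * tau)) ^ 2 * s)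
      with (2 * ((1 + 2 * c0 / tau) * s) * (L * (4 * MM * tau)) ^ 2) by ring.
    pose proof (pow2_ge_0 (L * (4 * MM * tau))); nra. }
  apply Rle_trans with (C2 * (G0 + (1 + 2 * c0) * (32 * L ^ 2) * (MM ^ 2 * tau))).
  - apply Rmult_le_compat; [apply Rlt_le, exp_pos | lra | exact Hexp | lra].
  - pose proof (pow2_ge_0 MM); nra.
Qed.

Lemma is_lub_pointwise_le (F : R -> R -> R) T l :
  is_lub (fun y => exists x t, 0 <= t <= T /\ y = F x t) l ->
  forall x t, 0 <= t <= T -> F x t <= l.
Proof. intros [Hub _] x t Ht; apply Hub; exists x, t; auto. Qed.

Lemma is_lub_Cmod_le (uh vh : R -> R -> C) T M0 :
  is_lub (fun y => exists x t, 0 <= t <= T /\ y = Cmod (uh x t) + Cmod (vh x t) + 1) M0 ->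
  forall x t, 0 <= t <= T -> Cmod (uh x t) <= Rabs M0 /\ Cmod (vh x t) <= Rabs M0.
Proof.
  intros Hlub x t Ht; pose proof (is_lub_pointwise_le _ _ _ Hlub x t Ht); pose proof (Rle_abs M0).
  pose proof (Cmod_ge_0 (uh x t)); pose proof (Cmod_ge_0 (vh x t)); lra.
Qed.

Lemma is_lub_Cmod_deriv_le (uht uhx vht vhx : R -> R -> C) T MM :
  is_lub (fun y => exists x t, 0 <= t <= T /\
            y = Cmod (uht x t) + Cmod (uhx x t) + Cmod (vht x t) + Cmod (vhx x t) + 1) MM ->
  forall x t, 0 <= t <= T -> 0 <= MM /\ Cmod (uhx x t) <= MM /\ Cmod (vhx x t) <= MM.
Proof.
  intros Hlub x t Ht; pose proof (is_lub_pointwise_le _ _ _ Hlub x t Ht).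
  pose proof (Cmod_ge_0 (uht x t)); pose proof (Cmod_ge_0 (uhx x t));
    pose proof (Cmod_ge_0 (vht x t)); pose proof (Cmod_ge_0 (vhx x t)); lra.
Qed.

Theorem lemma4p3 :
  forall (m alpha beta c0 M0 MM : R),
    0 <= m -> 0 < c0 ->
    exists C2 C3 : R, 0 < C2 /\ 0 < C3 /\
    forall (T : R) (uh vh uhx uht vhx vht : R -> R -> C),
      0 < T ->
      smooth2 uh -> smooth2 vh ->
      (forall x t, is_derive (fun y => uh y t) x (uhx x t) /\
                   is_derive (fun s => uh x s) t (uht x t) /\
                   is_derive (fun y => vh y t) x (vhx x t) /\
                   is_derive (fun s => vh x s) t (vht x t)) ->
      (forall x t, 0 <= t <= T ->
         Cplus (uht x t) (uhx x t) = NL1 m alpha beta (uh x t) (vh x t) /\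
         Cminus (vht x t) (vhx x t) = NL2 m alpha beta (uh x t) (vh x t)) ->
      (* M0 and M are the (finite) suprema over R x [0,T] *)
      is_lub (fun y => exists x t, 0 <= t <= T /\
                y = Cmod (uh x t) + Cmod (vh x t) + 1) M0 ->
      is_lub (fun y => exists x t, 0 <= t <= T /\
                y = Cmod (uht x t) + Cmod (uhx x t) + Cmod (vht x t)
                    + Cmod (vhx x t) + 1) MM ->
      forall (tau : R) (u0 v0 : Z -> C) (U V : R -> R -> C),
        0 < tau < 1 ->
        (forall N : nat,
           sumZ_sym (fun j => Cmod (u0 j) ^ 2 + Cmod (v0 j) ^ 2) N * tau <= c0) ->
        time_splitting m alpha beta tau u0 v0 U V ->
        forall (j : Z) (n : nat) (Lu Lv : C) (wu wv : R -> C),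
          (INR n + 1) * tau <= T ->
          (* (Lu, Lv) = (u_{j+1}^{n+1-}, v_{j+1}^{n+1-}) *)
          filterlim (fun t => U ((IZR j + 1) * tau) t)
                    (at_left ((INR n + 1) * tau)) (locally Lu) ->
          filterlim (fun t => V ((IZR j + 1) * tau) t)
                    (at_left ((INR n + 1) * tau)) (locally Lv) ->
          (* (wu, wv) = (u_{j+1}^{n,2}, v_{j+1}^{n,2}) *)
          solves_N m alpha beta wu wv -> wu 0 = Lu -> wv 0 = Lv ->
          let cU := fun s => Cminus (uh (IZR j * tau + s) (INR n * tau + s)) (wu s) in
          let cV := fun s => Cminus (vh ((IZR j + 2) * tau - s) (INR n * tau + s)) (wv s) in
          let cL := fun s => Cmod (cU s) ^ 2 + Cmod (cV s) ^ 2 in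
          let cD := fun s => Cmod (cU s) ^ 2 * Cmod (wv s) ^ 2
                             + Cmod (cV s) ^ 2 * Cmod (wu s) ^ 2 in
          forall s : R, 0 <= s <= tau ->
            cL s + cD s <= C2 * (cL 0 + cD 0) + C3 * MM ^ 2 * tau.
Proof.
  intros m al be c0 M0 MM Hm Hc0.
  exists (splitting_C2 m al be c0 (Rabs M0)), (splitting_C3 m al be c0 (Rabs M0)).
  split; [apply exp_pos|]; split; [apply splitting_C3_pos; auto|].
  intros T uh vh uhx uht vhx vht HT Hsu Hsv Hder Hpde Hlub0 Hlub1 tau u0 v0 U V Htau Hsum HTS
    j n Lu Lv wu wv HnT Hlu Hlv HN Hwu Hwv cU cV cL cD s Hs.
  pose proof (is_lub_Cmod_le _ _ _ _ Hlub0) as HM.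
  pose proof (is_lub_Cmod_deriv_le _ _ _ _ _ _ Hlub1) as HMM.
  assert (Hn : 0 <= INR n * tau) by (apply Rmult_le_pos; [apply pos_INR | lra]).
  assert (Hmass : Cmod (wu 0) ^ 2 + Cmod (wv 0) ^ 2 <= 2 * c0 / tau)
    by (rewrite Hwu, Hwv;
        apply (splitting_left_limit_mass m al be tau u0 v0 U V Hm ltac:(lra) HTS c0 n j); auto).
  replace (cL s + cD s) with (weighted_gap (uh (IZR j * tau + s) (INR n * tau + s))
    (vh ((IZR j + 2) * tau - s) (INR n * tau + s)) (wu s) (wv s))
    by (unfold weighted_gap, cL, cD, cU, cV; ring).
  replace (cL 0 + cD 0) with (weighted_gap (uh (IZR j * tau + 0) (INR n * tau + 0))
    (vh ((IZR j + 2) * tau - 0) (INR n * tau + 0)) (wu 0) (wv 0))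
    by (unfold weighted_gap, cL, cD, cU, cV; ring).
  eapply Rle_trans.
  - apply (characteristic_weighted_gap_le m al be T (Rabs M0) MM uh vh uhx uht vhx vht)
      with (K := 2 * c0 / tau) (tau := tau); auto; try lra.
    intros x t Ht; apply (HMM x t Ht).
  - apply splitting_gronwall_bound; auto using weighted_gap_nonneg, gap_rate_nonneg, Rabs_pos,
      nl_lip_nonneg.
    apply (HMM 0 0); lra.
Qed.
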